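(* Let $n,m\in\mathbb{N}$ and $f,g:\mathbb{F}_2^n\to\mathbb{F}_2$. Run algorithm $\mathbb{A}^{(m)}(\mathrm{H}^{\otimes n})$ and measure all $2n$ qubits. Then for every $\mathbf{y}\in\mathbb{F}_2^n$ the probability of observing $\ket{\mathbf{y}}\ket{0^n}$ is $2^{-3n}|C^{(m)}_{f,g}(\mathbf{y})|^2$.
   Context: $\zeta_m=e^{2\pi i/m}$, $\overline{\zeta_m}$ its conjugate; $wt$ is Hamming weight; $\mathbf{x}\cdot\mathbf{y}=\bigoplus_i x_iy_i$; $\mathbf{x}\odot\mathbf{y}=\sum_ix_iy_i$ in the integers. $m$-crosscorrelation: $C^{(m)}_{f,g}(\mathbf{y})=\sum_{\mathbf{x}}(-1)^{f(\mathbf{x})\oplus g(\mathbf{x}\oplus\mathbf{y})}(\zeta_m^2)^{\mathbf{x}\odot\mathbf{y}}$. Gates: $\mathrm{H}$ Hadamard; $\Omega_m=\frac{1}{\sqrt2}\begin{pmatrix}1&\zeta_m\\1&-\zeta_m\end{pmatrix}$; $\overline{\Omega}_m=\frac{1}{\sqrt2}\begin{pmatrix}1&\overline{\zeta_m}\\1&-\overline{\zeta_m}\end{pmatrix}$; $U_f$ is the phase oracle $\ket{\mathbf{x}}\mapsto(-1)^{f(\mathbf{x})}\ket{\mathbf{x}}$. Algorithm $\mathbb{A}^{(m)}(\mathrm{C}_n)$, for an $n$-qubit unitary $\mathrm{C}_n$: two $n$-qubit registers start in $\ket{0^n}\ket{0^n}$; apply $\mathrm{C}_n$ to the first register; then on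 the second register run the three-query $m$-Forrelation circuit with the middle oracle replaced by the inner-product phase oracle controlled by the first register, i.e. apply to the second register in order $\mathrm{H}^{\otimes n}$, $U_f$, $\Omega_m^{\otimes n}$, then the two-register gate $\ket{\mathbf{y}}\ket{\mathbf{x}}\mapsto(-1)^{\mathbf{x}\cdot\mathbf{y}}\ket{\mathbf{y}}\ket{\mathbf{x}}$, then $\mathrm{H}^{\otimes n}$, $U_g$, $\overline{\Omega}_m^{\otimes n}$ on the second register; finally measure both registers. *)

From mathcomp Require Import all_boot all_algebra.
From mathcomp Require Import reals trigo.
From mathcomp Require Export complex.
Set Implicit Arguments. Unset Strict Implicit. Unset Printing Implicit Defensive.
Import GRing.Theory Num.Theory.
Local Open Scope ring_scope.
Local Open Scope complex_scope.

(* Bit strings x in F_2^n, i.e. computational basis labels of n qubits. *)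
Definition bits (n : nat) := {ffun 'I_n -> bool}.
Definition zero_bits (n : nat) : bits n := [ffun _ => false].
Definition xor_bits (n : nat) (x y : bits n) : bits n := [ffun i => x i (+) y i].

Definition dotF2 (n : nat) (x y : bits n) : bool := \big[addb/false]_(i < n) (x i && y i).
Definition dotZ (n : nat) (x y : bits n) : nat := \sum_(i < n) (x i && y i).

Section Quantum.
Variable R : realType.
Local Notation C := R[i].

Definition zeta (m : nat) : C := (cos (2 * pi / m%:R)) +i* (sin (2 * pi / m%:R)).

Definition sgn (b : bool) : C := (-1) ^+ b.

Definition crosscorr (m n : nat) (f g : bits n -> bool) (y : bits n) : C :=
  \sum_(x : bits n) sgn (f x (+) g (xor_bits x y)) * (zeta m ^+ 2) ^+ dotZ x y.

(* A one-qubit gate given by its 2x2 matrix: G a b = <a| G |b> (row a, column b). *)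
Definition gate1 := bool -> bool -> C.
Definition invsqrt2 : C := ((Num.sqrt (2 : R))^-1)%:C.
Definition hadamard : gate1 := fun a b => invsqrt2 * sgn (a && b).
(* Omega_m = 1/sqrt2 [[1, zeta],[1, -zeta]] *)
Definition omega (m : nat) : gate1 :=
  fun a b => invsqrt2 * (if b then zeta m else 1) * sgn (a && b).
(* conj(Omega)_m = 1/sqrt2 [[1, conj zeta],[1, - conj zeta]] *)
Definition omegabar (m : nat) : gate1 :=
  fun a b => invsqrt2 * (if b then (zeta m)^* else 1) * sgn (a && b).

(* An n-qubit operator, given by its matrix entries <z| U |x>. *)
Definition opn (n : nat) := bits n -> bits n -> C.
Definition tens (n : nat) (G : gate1) : opn n := fun z x => \prod_(i < n) G (z i) (x i).
Definition phase_oracle (n : nat) (f : bits n -> bool) : opn n :=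
  fun z x => if z == x then sgn (f x) else 0.

(* A state of two n-qubit registers: psi a b = amplitude of |a>|b>. *)
Definition state2 (n : nat) := bits n -> bits n -> C.
Definition init2 (n : nat) : state2 n :=
  fun a b => if (a == zero_bits n) && (b == zero_bits n) then 1 else 0.
Definition app1 (n : nat) (U : opn n) (psi : state2 n) : state2 n :=
  fun a b => \sum_(a' : bits n) U a a' * psi a' b.
Definition app2 (n : nat) (U : opn n) (psi : state2 n) : state2 n :=
  fun a b => \sum_(b' : bits n) U b b' * psi a b'.
(* two-register gate |y>|x> |-> (-1)^{x.y} |y>|x> (y = first register) *)
Definition ctrl_ip (n : nat) (psi : state2 n) : state2 n :=
  fun a b => sgn (dotF2 b a) * psi a b.

Definition algA (m n : nat) (f g : bits n -> bool) (Cn : opn n) : state2 n :=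
  let psi1 := app1 Cn (@init2 n) in
  let psi2 := app2 (@tens n hadamard) psi1 in
  let psi3 := app2 (phase_oracle f) psi2 in
  let psi4 := app2 (@tens n (omega m)) psi3 in
  let psi5 := ctrl_ip psi4 in
  let psi6 := app2 (@tens n hadamard) psi5 in
  let psi7 := app2 (phase_oracle g) psi6 in
  app2 (@tens n (omegabar m)) psi7.

Definition prob2 (n : nat) (psi : state2 n) (a b : bits n) : C := `|psi a b| ^+ 2.

End Quantum.
Arguments tens {R} n G _ _.
Arguments init2 {R} n _ _.
Arguments algA {R} m {n} f g Cn _ _.
Arguments crosscorr {R} m {n} f g y.
Arguments prob2 {R} {n} psi a b.
Arguments hadamard {R} _ _.

(* Conditioned on the first register holding y, the controlled inner-product
   gate acts on the second register as the phase oracle of x |-> x.y, so the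
   second register runs the three-query Forrelation circuit.  In the amplitude
   of |y>|0^n> the Hadamard layer between the oracles contributes the character
   sum  sum_b (-1)^(b.(c + x + y)) = 2^n [c = x + y],  which collapses the sum
   to one over x; the phases of Omega and its conjugate then combine, via
   zeta * conj zeta = 1, into zeta^(2 x(.)y) times a unimodular factor that
   depends on y only.  The normalisation is 2^(-5n/2) * 2^n. *)

From mathcomp Require Import all_boot all_algebra.
From mathcomp Require Import reals trigo complex ring.
Set Implicit Arguments. Unset Strict Implicit. Unset Printing Implicit Defensive.
Import GRing.Theory Num.Theory.
Local Open Scope ring_scope.

Section ForrelationAmplitude.
Variable R : realType.
Local Notation C := R[i].
Local Notation sgn := (sgn R).
Local Notation s := (invsqrt2 R).

Lemma sgnD a b : sgn (a (+) b) = sgn a * sgn b.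
Proof. by case: a; case: b; rewrite /sgn /= ?expr0 ?expr1 ?mulrNN ?mulr1 ?mul1r. Qed.

Lemma sgn_dotF2 n (a b : bits n) : sgn (dotF2 a b) = \prod_i sgn (a i && b i).
Proof. exact: (big_morph sgn sgnD). Qed.

Lemma dotF2C n (a b : bits n) : dotF2 a b = dotF2 b a.
Proof. by apply: eq_bigr => i _; rewrite andbC. Qed.

Lemma dotF2_zero n (z : bits n) : dotF2 z (zero_bits n) = false.
Proof. by rewrite /dotF2 big1 // => i _; rewrite ffunE andbF. Qed.

Lemma sgn_dotF2_xor n (b u v : bits n) :
  sgn (dotF2 b (xor_bits u v)) = sgn (dotF2 b u) * sgn (dotF2 b v).
Proof.
rewrite !sgn_dotF2 -big_split; apply: eq_bigr => i _.
by rewrite ffunE andb_addr sgnD.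
Qed.

Lemma xor_bits_eq0 n (c d : bits n) : (xor_bits c d == zero_bits n) = (c == d).
Proof.
apply/eqP/eqP => [cd0|->]; apply/ffunP => i; last by rewrite !ffunE addbb.
by move/ffunP/(_ i): cd0; rewrite !ffunE; case: (c i) (d i) => [] [].
Qed.

Lemma sum_sgn_dotF2 n (z : bits n) :
  \sum_b sgn (dotF2 b z) = if z == zero_bits n then 2 ^+ n else 0.
Proof.
under eq_bigr do rewrite sgn_dotF2.
rewrite -(bigA_distr_bigA (fun i c => sgn (c && z i))) /=.
have sum_bit i : \sum_(c : bool) sgn (c && z i) = if z i then 0 else 2.
  by rewrite big_bool; case: (z i); rewrite /sgn /= ?expr1 ?addNr.
under eq_bigr do rewrite sum_bit.
case: eqP => [-> | /eqP z_neq0].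
  by under eq_bigr do rewrite ffunE; rewrite prodr_const card_ord.
have [i zi] : exists i, z i.
  apply/existsP; apply: contraR z_neq0 => /existsPn z0.
  by apply/eqP/ffunP => i; rewrite ffunE; apply/negbTE/z0.
by rewrite (bigD1 i) //= zi mul0r.
Qed.

Lemma sum_sgn_dotF2_xor n (F : bits n -> C) u :
  \sum_c F c * \sum_b sgn (dotF2 b (xor_bits c u)) = 2 ^+ n * F u.
Proof.
under eq_bigr do rewrite sum_sgn_dotF2 xor_bits_eq0.
rewrite (bigD1 u) //= eqxx big1 => [|c /negbTE ->]; last by rewrite mulr0.
by rewrite addr0 mulrC.
Qed.

Definition bit_phase n (z : C) (x : bits n) : C := \prod_i (if x i then z else 1).

Lemma bit_phase_xor n (x y : bits n) (z w : C) : z * w = 1 ->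
  bit_phase z x * bit_phase w (xor_bits x y) = bit_phase w y * (z ^+ 2) ^+ dotZ x y.
Proof.
move=> zw1; rewrite /bit_phase /dotZ -prodrXr -!big_split /=.
apply: eq_bigr => i _; rewrite ffunE.
case: (x i) (y i) => [] []; rewrite /= ?expr0 ?expr1 ?mulr1 ?mul1r //.
by rewrite expr2 mulrA [w * z]mulrC zw1 mul1r.
Qed.

Lemma norm_bit_phase n (z : C) (x : bits n) : `|z| = 1 -> `|bit_phase z x| = 1.
Proof.
by move=> z1; rewrite normr_prod big1 // => i _; case: (x i); rewrite ?normr1.
Qed.

Lemma tens_signed n (G : gate1 R) (k z : C) :
  (forall a b, G a b = k * (if b then z else 1) * sgn (a && b)) ->
  forall u x, tens n G u x = k ^+ n * bit_phase z x * sgn (dotF2 u x).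
Proof.
move=> G_def u x; rewrite /tens; under eq_bigr do rewrite G_def.
by rewrite !big_split /= prodr_const card_ord sgn_dotF2.
Qed.

Lemma tens_hadamard n u x : tens n hadamard u x = s ^+ n * sgn (dotF2 u x).
Proof.
rewrite (@tens_signed _ _ s 1) => [|a b]; last by rewrite if_same mulr1.
by rewrite /bit_phase big1 ?mulr1 // => i _; rewrite if_same.
Qed.

Lemma tens_omega m n u x :
  tens n (omega R m) u x = s ^+ n * bit_phase (zeta R m) x * sgn (dotF2 u x).
Proof. exact: tens_signed. Qed.

Lemma tens_omegabar m n u x :
  tens n (omegabar R m) u x = s ^+ n * bit_phase (zeta R m)^* x * sgn (dotF2 u x).
Proof. exact: tens_signed. Qed.

Lemma zeta_mulC m : zeta R m * (zeta R m)^* = 1.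
Proof.
have := cos2Dsin2 (2 * pi / m%:R : R).
rewrite /zeta; set c := cos _; set sn := sin _ => c2s2.
by apply/eqP; rewrite eq_complex /= -c2s2; apply/andP; split; apply/eqP; ring.
Qed.

Lemma norm_zeta m : `|zeta R m| = 1.
Proof. by apply/eqP; rewrite -sqrp_eq1 // normCK zeta_mulC. Qed.

Lemma invsqrt2_ge0 : 0 <= s.
Proof. by rewrite ler0c invr_ge0 sqrtr_ge0. Qed.

Lemma sqr_invsqrt2 : s ^+ 2 = 2^-1.
Proof.
rewrite /invsqrt2 -rmorphXn /= exprVn sqr_sqrtr ?ler0n //.
by rewrite rmorphV ?unitfE ?pnatr_eq0 //= rmorph_nat.
Qed.

Lemma sum_phase_oracle n (f : bits n -> bool) (h : bits n -> C) x :
  \sum_x' phase_oracle R f x x' * h x' = sgn (f x) * h x.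
Proof.
rewrite (bigD1 x) //= big1 ?addr0 => [|x' x'x]; first by rewrite /phase_oracle eqxx.
by rewrite /phase_oracle eq_sym (negbTE x'x) mul0r.
Qed.

Lemma app1_init2 n (U : opn R n) a b :
  app1 U (init2 n) a b = if b == zero_bits n then U a (zero_bits n) else 0.
Proof.
rewrite /app1 (bigD1 (zero_bits n)) //= big1 ?addr0 => [|a' /negbTE a'0].
  by rewrite /init2 eqxx; case: eqP; rewrite ?mulr1 ?mulr0.
by rewrite /init2 a'0 mulr0.
Qed.

Lemma hadamard_oracle_state n (f : bits n -> bool) a x :
  app2 (phase_oracle R f) (app2 (tens n hadamard) (app1 (tens n hadamard) (init2 n))) a x
  = s ^+ (2 * n) * sgn (f x).
Proof.
rewrite /app2 sum_phase_oracle; under eq_bigr do rewrite app1_init2.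
rewrite (bigD1 (zero_bits n)) //= eqxx big1 ?addr0 => [|b /negbTE ->]; last by rewrite mulr0.
by rewrite !tens_hadamard !dotF2_zero mulnC exprM; ring.
Qed.

Lemma forrelation_amplitude m n (g : bits n -> bool) (psi : state2 R n) y :
  app2 (tens n (omegabar R m)) (app2 (phase_oracle R g) (app2 (tens n hadamard)
    (ctrl_ip (app2 (tens n (omega R m)) psi)))) y (zero_bits n)
  = s ^+ (3 * n) * 2 ^+ n * \sum_x bit_phase (zeta R m)^* (xor_bits x y)
      * sgn (g (xor_bits x y)) * bit_phase (zeta R m) x * psi y x.
Proof.
rewrite /app2 /ctrl_ip.
transitivity (\sum_c \sum_b \sum_x s ^+ (3 * n) *
  (bit_phase (zeta R m)^* c * sgn (g c) * bit_phase (zeta R m) x * psi y x)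
  * sgn (dotF2 b (xor_bits c (xor_bits x y)))).
  apply: eq_bigr => c _; rewrite sum_phase_oracle tens_omegabar dotF2C dotF2_zero.
  rewrite !mulr_sumr; apply: eq_bigr => b _; rewrite tens_hadamard !mulr_sumr.
  apply: eq_bigr => x _; rewrite tens_omega !sgn_dotF2_xor [dotF2 c b]dotF2C.
  by rewrite mulnC exprM; ring.
under eq_bigr do rewrite exchange_big; rewrite exchange_big mulr_sumr.
apply: eq_bigr => x _; under eq_bigr do rewrite -mulr_sumr.
by rewrite sum_sgn_dotF2_xor; ring.
Qed.

Lemma algA_hadamard_amplitude m n (f g : bits n -> bool) y :
  algA m f g (tens n hadamard) y (zero_bits n)
  = s ^+ (5 * n) * 2 ^+ n * bit_phase (zeta R m)^* y * crosscorr m f g y.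
Proof.
rewrite /algA /= forrelation_amplitude /crosscorr !mulr_sumr; apply: eq_bigr => x _.
have := bit_phase_xor x y (zeta_mulC m).
rewrite hadamard_oracle_state sgnD (mulnDl 3 2) exprD.
by move=> phase; ring: phase.
Qed.

Lemma forrelation_normalization n : (s ^+ (5 * n) * 2 ^+ n) ^+ 2 = 2 ^- (3 * n).
Proof.
rewrite exprMn -exprM mulnC exprM sqr_invsqrt2 exprVn (mulnC 5) (mulnC 3) !exprM.
have two_n_neq0 : (2 ^+ n : C) != 0 by rewrite expf_neq0 ?pnatr_eq0.
by field.
Qed.
End ForrelationAmplitude.

Theorem theorem9 (R : realType) (n m : nat) (f g : bits n -> bool) (y : bits n) :
  (0 < m)%N ->
  prob2 (algA m f g (tens n (@hadamard R))) y (zero_bits n)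
  = (2 ^- (3 * n)) * `|crosscorr m f g y| ^+ 2.
Proof.
(* [zeta 0 = 1] is on the unit circle as well. *)
move=> _.
rewrite /prob2 algA_hadamard_amplitude !normrM norm_bit_phase ?norm_conjC ?norm_zeta //.
rewrite mulr1 -normrM ger0_norm ?mulr_ge0 ?exprn_ge0 ?invsqrt2_ge0 ?ler0n //.
by rewrite exprMn forrelation_normalization.
Qed.
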